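(* Let $0<m\le L$ and let the two-step momentum algorithm with constant parameters $(\alpha,\beta,\gamma)$ minimize some function $f\in\mathcal{Q}_m^L$ with linear rate $\rho<1$ (i.e. the spectral radius of the matrix $A$ associated with this $f$ is at most $\rho$). Then the convergence rate $\rho$ is achieved for all functions $f\in\mathcal{Q}_m^L$.
   Context: $\mathcal{Q}_m^L$ is the class of quadratic functions $f(x)=\tfrac12x^TQx-q^Tx$ on $\mathbb{R}^n$ with $q\in\mathbb{R}^n$, $Q=Q^T\succ0$ whose largest eigenvalue is $L$ and smallest is $m$; $x^\star$ is the minimizer. The (noiseless) two-step momentum algorithm is $x^{t+2}=x^{t+1}+\beta(x^{t+1}-x^t)-\alpha\nabla f\big(x^{t+1}+\gamma(x^{t+1}-x^t)\big)$; with $\psi^t=[(x^t-x^\star)^T,(x^{t+1}-x^\star)^T]^T$, $\psi^{t+1}=A\psi^t$, $A=\begin{bmatrix}0&I\\-\beta I+\gamma\alpha Q&(1+\beta)I-(1+\gamma)\alpha Q\end{bmatrix}$. Rate $\rho$ is achieved for $f$ when the spectral radius of the corresponding $A$ is at most $\rho$. *)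

From HB Require Import structures.
From mathcomp Require Import all_boot all_order all_algebra.
From mathcomp Require Import reals.
From mathcomp Require Import complex.
Set Implicit Arguments. Unset Strict Implicit. Unset Printing Implicit Defensive.
Import Order.TTheory GRing.Theory Num.Theory.
Local Open Scope ring_scope.
Local Open Scope complex_scope.

(* f(x) = 1/2 x^T Q x - q^T x belongs to Q_m^L : Q symmetric positive definite,
   largest eigenvalue L, smallest eigenvalue m. *)
Definition in_QmL (R : realType) (n : nat) (m L : R)
    (Q : 'M[R]_n) (q : 'cV[R]_n) : Prop :=
  [/\ Q^T = Q,
      (forall x : 'cV[R]_n, x != 0 -> 0 < ((x^T *m Q *m x) 0 0)),
      eigenvalue Q L /\ (forall l, eigenvalue Q l -> l <= L) &
      eigenvalue Q m /\ (forall l, eigenvalue Q l -> m <= l)].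

Definition momentum_matrix (R : realType) (n : nat) (alpha beta gamma : R)
    (Q : 'M[R]_n) : 'M[R]_(n + n) :=
  block_mx 0 1%:M
           ((- beta)%:M + (gamma * alpha) *: Q)
           ((1 + beta)%:M - ((1 + gamma) * alpha) *: Q).

Definition spectral_radius_le (R : realType) (k : nat) (A : 'M[R]_k) (rho : R)
  : Prop :=
  forall z : R[i], eigenvalue (map_mx (fun x : R => x%:C) A) z ->
    `|z| <= rho%:C.

Definition achieves_rate (R : realType) (n : nat) (alpha beta gamma : R)
    (Q : 'M[R]_n) (q : 'cV[R]_n) (rho : R) : Prop :=
  spectral_radius_le (momentum_matrix alpha beta gamma Q) rho.

From HB Require Import structures.
From mathcomp Require Import all_boot all_order all_algebra.
From mathcomp Require Import reals complex ring lra.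
Set Implicit Arguments.
Unset Strict Implicit.
Unset Printing Implicit Defensive.
Import Order.TTheory GRing.Theory Num.Theory.
Local Open Scope ring_scope.
Local Open Scope complex_scope.

(* The eigenvalues of the momentum matrix A are the roots of
   z^2 - b(l) z + c(l), with b(l) = 1 + beta - (1 + gamma) alpha l and
   c(l) = beta - gamma alpha l, as l ranges over the eigenvalues of Q, which
   are real because Q is symmetric.  A real monic quadratic has both roots in
   the closed disk of radius rho iff it satisfies Jury's conditions, and these
   are finitely many inequalities affine in l.  Since m and L are eigenvalues
   of Q0, the conditions hold at l = m and l = L, hence on all of [m, L],
   which contains the spectrum of every Q in the class. *)

Section QuadraticRoots.
Variable R : realType.
Implicit Types (rho b c x y : R) (z : R[i]).

Definition quad b c z := z ^+ 2 - b%:C * z + c%:C.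

Definition jury_conditions rho b c :=
  [/\ c <= rho ^+ 2, b <= 2 * rho, - b <= 2 * rho,
      0 <= rho ^+ 2 - b * rho + c & 0 <= rho ^+ 2 + b * rho + c].

Lemma normc_le x y rho :
  `|x +i* y| <= rho%:C <-> 0 <= rho /\ x ^+ 2 + y ^+ 2 <= rho ^+ 2.
Proof.
rewrite normc_def lecR /=.
have [rho_ge0|rho_lt0] := leP 0 rho.
  by rewrite -(ler_sqrt _ (sqr_ge0 rho)) sqrtr_sqr ger0_norm //; split=> [|[]].
split=> [|[]]; last lra.
by have := sqrtr_ge0 (x ^+ 2 + y ^+ 2); lra.
Qed.

Lemma normc_real x : `|x%:C| = `|x|%:C.
Proof. by rewrite normc_def /= expr0n addr0 sqrtr_sqr. Qed.

Lemma quad_coef_cases b c :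
  (exists r1 r2, b = r1 + r2 /\ c = r1 * r2) \/
  (exists x y, b = 2 * x /\ c = x ^+ 2 + y ^+ 2).
Proof.
have [D_ge0|D_lt0] := leP 0 (b ^+ 2 - 4 * c).
- left; set s := Num.sqrt (b ^+ 2 - 4 * c).
  have s2 : s ^+ 2 = b ^+ 2 - 4 * c by rewrite sqr_sqrtr.
  exists ((b + s) / 2), ((b - s) / 2); split; first by field.
  have -> : (b + s) / 2 * ((b - s) / 2) = (b ^+ 2 - s ^+ 2) / 4 by field.
  by rewrite s2; field.
- right; set s := Num.sqrt (4 * c - b ^+ 2).
  have s2 : s ^+ 2 = 4 * c - b ^+ 2 by rewrite sqr_sqrtr //; lra.
  exists (b / 2), (s / 2); split; first by field.
  have -> : (b / 2) ^+ 2 + (s / 2) ^+ 2 = (b ^+ 2 + s ^+ 2) / 4 by field.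
  by rewrite s2; field.
Qed.

Lemma quad_realE r1 r2 z :
  quad (r1 + r2) (r1 * r2) z = (z - r1%:C) * (z - r2%:C).
Proof. by rewrite /quad rmorphD rmorphM /=; ring. Qed.

Lemma quad_conjE x y z :
  quad (2 * x) (x ^+ 2 + y ^+ 2) z = (z - x +i* y) * (z - x -i* y).
Proof. by case: z => a b; rewrite /quad /=; congr Complex; ring. Qed.

Lemma jury_real_roots rho r1 r2 :
  jury_conditions rho (r1 + r2) (r1 * r2) <-> `|r1| <= rho /\ `|r2| <= rho.
Proof.
rewrite !ler_norml; split.
  by case=> *; split; apply/andP; split; nra.
by case=> /andP[? ?] /andP[? ?]; split; nra.
Qed.

Lemma jury_conj_roots rho x y :
  jury_conditions rho (2 * x) (x ^+ 2 + y ^+ 2) <-> `|x +i* y| <= rho%:C.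
Proof.
rewrite normc_le; split; first by case=> *; split; lra.
by case=> *; split; nra.
Qed.

Lemma quad_roots_in_diskP rho b c :
  (forall z, quad b c z = 0 -> `|z| <= rho%:C) <-> jury_conditions rho b c.
Proof.
have root2P z a1 a2 : (z - a1) * (z - a2) = 0 -> z = a1 \/ z = a2.
  by move/eqP; rewrite mulf_eq0 !subr_eq0 => /orP[]/eqP; [left|right].
case: (quad_coef_cases b c) => [[r1 [r2 [-> ->]]]|[x [y [-> ->]]]].
- rewrite jury_real_roots; split=> [roots_le|[le1 le2] z].
    by rewrite -!lecR -!normc_real; split; apply: roots_le;
      rewrite quad_realE subrr ?mul0r ?mulr0.
  by rewrite quad_realE => /root2P[]->; rewrite normc_real lecR.
- rewrite jury_conj_roots; split=> [roots_le|le_xy z].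
    by apply: roots_le; rewrite quad_conjE subrr mul0r.
  rewrite quad_conjE => /root2P[]-> //.
  by move: le_xy; rewrite !normc_le sqrrN.
Qed.

End QuadraticRoots.

Section MomentumCoefficients.
Variables (R : realType) (alpha beta gamma : R).

Definition momentum_b (l : R) := 1 + beta - (1 + gamma) * alpha * l.
Definition momentum_c (l : R) := beta - gamma * alpha * l.

Lemma affine_ge0_between (p k m L x : R) : m <= x <= L ->
  0 <= p + k * m -> 0 <= p + k * L -> 0 <= p + k * x.
Proof. by case/andP=> *; have [k_ge0|k_lt0] := leP 0 k; nra. Qed.

Lemma jury_momentum_between rho m L l : m <= l <= L ->
  jury_conditions rho (momentum_b m) (momentum_c m) ->
  jury_conditions rho (momentum_b L) (momentum_c L) ->
  jury_conditions rho (momentum_b l) (momentum_c l).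
Proof.
rewrite /jury_conditions /momentum_b /momentum_c => mlL [? ? ? ? ?] [? ? ? ? ?].
have between p k := @affine_ge0_between p k m L l mlL.
split.
- by have := between (rho ^+ 2 - beta) (gamma * alpha); lra.
- by have := between (2 * rho - (1 + beta)) ((1 + gamma) * alpha); lra.
- by have := between (2 * rho + (1 + beta)) (- ((1 + gamma) * alpha)); lra.
- have := between (rho ^+ 2 - (1 + beta) * rho + beta)
                 ((1 + gamma) * alpha * rho - gamma * alpha); lra.
- have := between (rho ^+ 2 + (1 + beta) * rho + beta)
                 (- ((1 + gamma) * alpha * rho) - gamma * alpha); lra.
Qed.

End MomentumCoefficients.

Lemma eigenvalue_sym_real (R : realType) n (Q : 'M[R]_n) mu :
  Q^T = Q -> eigenvalue (map_mx (real_complex R) Q) mu -> mu \is Num.real.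
Proof.
move=> Q_sym /eigenvalueP[v Qv v_neq0].
set Qc := map_mx _ Q in Qv; set vb := map_mx (@conjc R) v.
have Qc_sym : Qc^T = Qc by rewrite map_trmx Q_sym.
have Qvb : vb *m Qc = mu^* *: vb.
  have conjQc : map_mx (@conjc R) Qc = Qc.
    by apply/matrixP=> i j; rewrite !mxE conjc_real.
  by rewrite -conjQc -map_mxM Qv map_mxZ.
have N_neq0 : (v *m vb^T) 0 0 != 0.
  rewrite mxE; apply: contra v_neq0 => /eqP N0; apply/eqP/rowP=> j.
  have /(_ j isT) : forall j, true -> v 0 j * vb^T j 0 = 0.
    by apply: (psumr_eq0P _ N0) => i _; rewrite !mxE mulcJ_ge0.
  by rewrite !mxE => /eqP; rewrite mulf_eq0 conjc_eq0 orbb => /eqP.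
have : mu *: (v *m vb^T) = mu^* *: (v *m vb^T).
  by rewrite scalemxAl -Qv -mulmxA -Qc_sym -trmx_mul Qvb linearZ scalemxAr.
move: N_neq0; move: (v *m vb^T) => N N_neq0 /matrixP/(_ 0 0).
rewrite !mxE => /eqP; rewrite -subr_eq0 -mulrBl.
rewrite mulf_eq0 (negbTE N_neq0) orbF subr_eq0.
case: mu {Qv Qvb} => a b /= /eqP[] b_eq.
by rewrite complex_real; apply/eqP; lra.
Qed.

Section MomentumSpectrum.
Variables (R : realType) (n : nat) (alpha beta gamma : R) (Q : 'M[R]_n).
Local Notation Qc := (map_mx (real_complex R) Q).
Local Notation Ac :=
  (map_mx (fun x : R => x%:C) (momentum_matrix alpha beta gamma Q)).
Local Notation K z := (alpha%:C * (gamma%:C - (1 + gamma%:C) * z)).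
Local Notation P z := (z ^+ 2 - (1 + beta%:C) * z + beta%:C).

Lemma mul_row_momentum (u v : 'rV[R[i]]_n) :
  row_mx u v *m Ac =
  row_mx (- beta%:C *: v + (gamma * alpha)%:C *: (v *m Qc))
         (u + ((1 + beta%:C) *: v - ((1 + gamma) * alpha)%:C *: (v *m Qc))).
Proof.
rewrite [map_mx _ _](map_block_mx (real_complex R)) map_mx0 map_mx1 map_mxD
  map_mxB !map_scalar_mx !map_mxZ rmorphN rmorphD rmorph1.
rewrite mul_row_block !mulmx0 mulmx1 add0r mulmxDr mulmxBr !mul_mx_scalar.
by rewrite -!scalemxAr.
Qed.

(* The two block rows of [row_mx u v *m Ac = z *: row_mx u v], with [q = v Q],
   combine into [K z * q = P z * v]. *)
Lemma momentum_residualE (z u x q : R[i]) :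
  K z * q - P z * x =
  z * (u + ((1 + beta%:C) * x - ((1 + gamma) * alpha)%:C * q) - z * x)
  + (- beta%:C * x + (gamma * alpha)%:C * q - z * u).
Proof. by rewrite !rmorphM rmorphD /=; ring. Qed.

Lemma eigenvalue_momentumP z :
  eigenvalue Ac z <-> exists2 v : 'rV_n, v != 0 & K z *: (v *m Qc) = P z *: v.
Proof.
split.
- case/eigenvalueP=> w; rewrite -[w]hsubmxK mul_row_momentum scale_row_mx.
  move: (lsubmx w) (rsubmx w) => u v /eq_row_mx[Eu Ev] w_neq0.
  exists v.
    apply: contraNneq w_neq0 => v0; move: Ev; rewrite v0 mul0mx !scaler0.
    by rewrite subr0 !addr0 => ->; rewrite row_mx0.
  apply/rowP=> j; move/rowP/(_ j): Eu; move/rowP/(_ j): Ev; rewrite !mxE.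
  move=> ev eu; apply/eqP; rewrite -subr_eq0 (momentum_residualE z (u 0 j)).
  by rewrite ev eu !subrr mulr0 addr0.
- case=> v v_neq0 Kv; apply/eigenvalueP.
  set u := z *: v
    - ((1 + beta%:C) *: v - ((1 + gamma) * alpha)%:C *: (v *m Qc)).
  exists (row_mx u v); last first.
    apply: contraNneq v_neq0 => /eqP.
    by rewrite -row_mx0 => /eqP/eq_row_mx[_ ->].
  rewrite mul_row_momentum scale_row_mx /u subrK; congr row_mx.
  apply/rowP=> j; move/rowP/(_ j): Kv; rewrite !mxE => Kv.
  apply/eqP; rewrite -subr_eq0.
  have := momentum_residualE z (u 0 j) (v 0 j) ((v *m Qc) 0 j).
  by rewrite /u !mxE Kv subrr subrK subrr mulr0 add0r => <-.
Qed.

Lemma momentum_quadE l z :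
  quad (momentum_b alpha beta gamma l) (momentum_c alpha beta gamma l) z
  = P z - l%:C * K z.
Proof.
by rewrite /quad /momentum_b /momentum_c !rmorphB !rmorphM !rmorphD /=; ring.
Qed.

Lemma momentum_eigenvalue_of_root l z : eigenvalue Q l ->
  quad (momentum_b alpha beta gamma l) (momentum_c alpha beta gamma l) z = 0 ->
  eigenvalue Ac z.
Proof.
rewrite -(eigenvalue_map (real_complex R)) => /eigenvalueP[v Qv v_neq0].
rewrite momentum_quadE => /eqP; rewrite subr_eq0 => /eqP PK.
by apply/eigenvalue_momentumP; exists v; rewrite // Qv scalerA mulrC PK.
Qed.

(* [l0] is only a fallback: when [K z = 0], [z] is a root for every [l]. *)
Lemma momentum_root_of_eigenvalue l0 z : Q^T = Q -> eigenvalue Q l0 ->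
  eigenvalue Ac z ->
  exists2 l, eigenvalue Q l &
    quad (momentum_b alpha beta gamma l) (momentum_c alpha beta gamma l) z = 0.
Proof.
move=> Q_sym Ql0 /eigenvalue_momentumP[v v_neq0 Kv].
have [K0|K_neq0] := eqVneq (K z) 0.
  exists l0 => //; rewrite momentum_quadE K0 mulr0 subr0.
  have /eqP : P z *: v = 0 by rewrite -Kv K0 scale0r.
  by rewrite scaler_eq0 (negbTE v_neq0) orbF => /eqP.
set mu := P z / K z.
have Qv : v *m Qc = mu *: v.
  by apply: (scalerI K_neq0); rewrite Kv scalerA [K z * _]mulrC /mu divfK.
have /(eigenvalue_sym_real Q_sym) mu_real : eigenvalue Qc mu.
  by apply/eigenvalueP; exists v.
exists (complex.Re mu).
  rewrite -(eigenvalue_map (real_complex R)); apply/eigenvalueP; exists v => //.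
  by rewrite Qv; congr (_ *: _); exact/esym/RRe_real.
by rewrite momentum_quadE RRe_real // /mu divfK // subrr.
Qed.

End MomentumSpectrum.

Theorem corollary1 (R : realType) (n : nat) (m L alpha beta gamma rho : R)
  (Q0 : 'M[R]_n) (q0 : 'cV[R]_n) :
  0 < m -> m <= L -> rho < 1 ->
  in_QmL m L Q0 q0 -> achieves_rate alpha beta gamma Q0 q0 rho ->
  forall (Q : 'M[R]_n) (q : 'cV[R]_n),
    in_QmL m L Q q -> achieves_rate alpha beta gamma Q q rho.
Proof.
move=> _ _ _ [_ _ [Q0L _] [Q0m _]] rate0 Q q [Q_sym _ [_ le_L] [Qm le_m]] z Az.
have [l Ql root_z] := momentum_root_of_eigenvalue Q_sym Qm Az.
move: z root_z {Az}; apply/quad_roots_in_diskP.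
have jury_at l' : eigenvalue Q0 l' -> jury_conditions rho
    (momentum_b alpha beta gamma l') (momentum_c alpha beta gamma l').
  move=> Q0l'; apply/quad_roots_in_diskP => z root_z; apply: rate0.
  exact: momentum_eigenvalue_of_root Q0l' root_z.
apply: jury_momentum_between (jury_at _ Q0m) (jury_at _ Q0L).
by rewrite le_m ?le_L.
Qed.
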